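(* For all $d,m\in\mathbb{N}$ there exist $c'=c'(d,m)$ and $d'=d'(d,m)$ such that for every $n\ge m$, every polynomial map $p:\mathbb{R}^n\to\mathbb{R}^m$ with components of degree at most $d$, and every $\Lambda=(\Lambda_1,\dots,\Lambda_m)\in\mathbb{R}^m_+$, the set $C^\Lambda(p)$ is closed and semialgebraic with diagram $D(C^\Lambda(p))=(n,c',d')$.
   Context: $C^\Lambda(p)=\{x\in\mathbb{R}^n:\sigma_i(D_xp)\le\Lambda_i\ \forall i=1,\dots,m\}$, where $\sigma_i(L)=\lambda_i(LL^\top)^{1/2}$ are the singular values (eigenvalues in decreasing order). A set $S\subset\mathbb{R}^n$ is semialgebraic if $S=\bigcup_{i=1}^a\bigcap_{j=1}^{b_i}\{x:\mathrm{sign}(p_{ij}(x))=\sigma_{ij}\}$ for polynomials $p_{ij}$ and $\sigma_{ij}\in\{0,1,-1\}$; ''$D(S)=(n,c',d')$'' means $S$ admits such a representation with $a\cdot\max_ib_i\le c'$ and $\max_{i,j}\deg p_{ij}\le d'$. *)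

From HB Require Import structures.
From mathcomp Require Import all_boot all_order all_algebra.
From mathcomp Require Import all_classical all_reals all_analysis.
From mathcomp Require mpoly.

Set Implicit Arguments.
Unset Strict Implicit.
Unset Printing Implicit Defensive.

Import Order.TTheory GRing.Theory Num.Theory.
Import numFieldTopology.Exports numFieldNormedType.Exports.
Local Open Scope ring_scope.
Local Open Scope classical_set_scope.

Notation mpol n R := (mpoly.mpoly n R).

Definition mdeg_le (R : realType) (n : nat) (p : mpol n R) (d : nat) : bool :=
  all (fun mm => (mpoly.mdeg mm <= d)%N) (mpoly.msupp p).

Definition peval (R : realType) (n : nat) (p : mpol n R) (x : 'rV[R]_n) : R :=
  mpoly.meval (fun i => x ord0 i) p.

Definition jacobian (R : realType) (n m : nat) (p : 'I_m -> mpol n R)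
  (x : 'rV[R]_n) : 'M[R]_(m, n) :=
  \matrix_(i < m, j < n) peval (mpoly.mderiv j (p i)) x.

Definition eigvals_desc (R : realType) (k : nat) (A : 'M[R]_k) (s : seq R) : Prop :=
  sorted (fun a b : R => b <= a) s /\
  char_poly A = \prod_(a <- s) ('X - a%:P).

Definition eigvals (R : realType) (k : nat) (A : 'M[R]_k) : seq R :=
  xget [::] [set s | eigvals_desc A s].

(* sigma_i(L) = lambda_i(L L^T)^{1/2}  (index i : 'I_m, 0-based) *)
Definition sing_val (R : realType) (m n : nat) (L : 'M[R]_(m, n)) (i : 'I_m) : R :=
  Num.sqrt (nth 0 (eigvals (L *m L^T)) i).

Definition CLambda (R : realType) (n m : nat) (p : 'I_m -> mpol n R)
  (Lam : 'I_m -> R) : set 'rV[R]_n :=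
  [set x | forall i : 'I_m, sing_val (jacobian p x) i <= Lam i].

(* S admits a representation
     S = \bigcup_{i<a} \bigcap_{j<b_i} {x : sign(p_ij(x)) = sigma_ij}
   with a * max_i b_i <= c' and max deg p_ij <= d', i.e. D(S) = (n, c', d'). *)
Definition semialg_diagram (R : realType) (n : nat) (S : set 'rV[R]_n)
  (c' d' : nat) : Prop :=
  exists (a : nat) (b : 'I_a -> nat)
         (P : forall i : 'I_a, 'I_(b i) -> mpol n R)
         (sg : forall i : 'I_a, 'I_(b i) -> R),
    [/\ (a * \max_(i < a) b i <= c')%N,
        (forall i j, mdeg_le (P i j) d'),
        (forall i j, sg i j \in [:: 0; 1; -1]) &
        S = [set x | exists i : 'I_a, forall j : 'I_(b i),
                       Num.sg (peval (P i j) x) = sg i j]].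

From Pilot Require Import Defs.
From mathcomp Require Import all_boot all_order all_algebra.
From mathcomp Require Import all_classical all_reals all_analysis.
From mathcomp Require mpoly.
From mathcomp Require Import qe_rcf ordered_qelim complex spectral.
From mathcomp Require Import perm.
Import (canonicals, coercions) mpoly.
Import Order.TTheory GRing.Theory Num.Theory.
Import numFieldTopology.Exports numFieldNormedType.Exports.
Local Open Scope ring_scope.
Local Open Scope classical_set_scope.
Set Implicit Arguments.
Unset Strict Implicit.
Unset Printing Implicit Defensive.

(* For a real m x n matrix L, sigma_i(L) <= Lam_i says that the i-th largest
   eigenvalue of the Gram matrix L L^T is at most Lam_i^2.  Whether the sorted
   spectrum of an m x m matrix A lies below a bound vector b is a first-order
   formula in the entries of A and b whose shape depends on m only: every
   sorted list nu with det (x - A) = prod_i (x - nu_i) satisfies nu_i <= b_i.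
   Quantifier elimination over real closed fields turns it into a finite
   disjunction of conjunctions of sign conditions on polynomials in these
   entries.  Substituting the entries of D_x p (D_x p)^T, polynomials of degree
   at most 2d in x, and the constants Lam_i^2 yields a representation of
   C^Lam(p) whose size and degrees depend on d and m only.

   Closedness: near a point x, C^Lam(p) is the projection of the compact set of
   pairs (y, nu) with |y - x| <= 1, nu the sorted spectrum of the Gram matrix
   at y and nu_i <= Lam_i^2; the spectrum lies in [0, sum_i Lam_i^2] because
   Gram matrices are positive semidefinite. *)

(** * Characteristic polynomials and sorted spectra *)

Lemma eq_poly_horner (R : numDomainType) (p q : {poly R}) :
  (forall x, p.[x] = q.[x]) -> p = q.
Proof.
move=> eq_pq; apply/eqP; rewrite -subr_eq0; apply/negPn/negP => nz_pq.
suff : (size (p - q)%R < size (p - q)%R)%N by rewrite ltnn.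
rewrite -[X in (X < _)%N](size_iota 0) -(size_map (fun i => i%:R : R)).
apply: max_poly_roots nz_pq _ _.
  by apply/allP => _ /mapP[i _ ->]; rewrite /root !hornerE eq_pq subrr.
by rewrite map_inj_uniq ?iota_uniq //; apply: mulrIn; rewrite oner_neq0.
Qed.

Lemma horner_char_poly (R : comNzRingType) m (A : 'M[R]_m) x :
  (char_poly A).[x] = \det (x%:M - A).
Proof.
rewrite /char_poly -[_.[x]]/(horner_eval x _) -det_map_mx; congr (\det _).
apply/matrixP => i j; rewrite !mxE /horner_eval.
by rewrite rmorphB rmorphMn /= horner_evalE hornerX horner_evalE hornerC.
Qed.

Lemma char_poly_prod_XsubC (R : numDomainType) m (A : 'M[R]_m) (s : seq R) :
  char_poly A = \prod_(a <- s) ('X - a%:P) <->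
  forall x, \det (x%:M - A) = \prod_(a <- s) (x - a).
Proof.
split => [cpA x | eq_det].
  rewrite -horner_char_poly cpA horner_prod.
  by apply: eq_bigr => a _; rewrite hornerXsubC.
apply: eq_poly_horner => x; rewrite horner_char_poly eq_det horner_prod.
by apply: eq_bigr => a _; rewrite hornerXsubC.
Qed.

Lemma char_poly_similar (R : comUnitRingType) k (P D : 'M[R]_k) :
  P \in unitmx -> char_poly (invmx P *m D *m P) = char_poly D.
Proof.
move=> uP; rewrite /char_poly /char_poly_mx.
set Pp := map_mx polyC P; set Pi := map_mx polyC (invmx P).
have PiPp : Pi *m Pp = 1%:M by rewrite -map_mxM mulVmx // map_mx1.
have -> : 'X%:M - map_mx polyC (invmx P *m D *m P) =
          Pi *m ('X%:M - map_mx polyC D) *m Pp.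
  rewrite !map_mxM -/Pp -/Pi mulmxBr mulmxBl mul_mx_scalar -scalemxAl PiPp.
  by rewrite scalemx1.
by rewrite !det_mulmx mulrAC -det_mulmx PiPp det1 mul1r.
Qed.

Lemma nth_map_ord_enum (T : Type) (x0 : T) k (f : 'I_k -> T) (i : 'I_k) :
  nth x0 [seq f j | j <- enum 'I_k] i = f i.
Proof. by rewrite (nth_map i) ?size_enum_ord // nth_ord_enum. Qed.

Lemma sorted_ge_map_enum (R : numDomainType) k (f : 'I_k -> R) :
  sorted (fun a b => b <= a) [seq f i | i <- enum 'I_k] <->
  forall i j : 'I_k, (i <= j)%N -> f j <= f i.
Proof.
split => [srt i j le_ij | anti].
  have ge_tr : transitive (fun a b : R => b <= a) by move=> a b c /[swap]; apply: le_trans.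
  have := sorted_leq_nth ge_tr (@lexx _ R) 0 srt; rewrite size_map size_enum_ord.
  by move=> /(_ i j (ltn_ord i) (ltn_ord j) le_ij); rewrite !nth_map_ord_enum.
apply/(sortedP 0) => i; rewrite size_map size_enum_ord => lt_i1k.
have lt_ik := ltnW lt_i1k.
move: (nth_map_ord_enum 0 f (Ordinal lt_ik)) (nth_map_ord_enum 0 f (Ordinal lt_i1k)).
by move=> /= -> ->; apply: anti.
Qed.

Section Eigenvalues.
Variable R : realType.

Definition spectrum_le k (A : 'M[R]_k) (b : 'I_k -> R) : Prop :=
  forall s, eigvals_desc A s -> forall i : 'I_k, nth 0 s i <= b i.

Lemma eigvals_desc_size k (A : 'M[R]_k) s : eigvals_desc A s -> size s = k.
Proof. by case=> _ cpA; have := size_char_poly A; rewrite cpA size_prod_XsubC => -[]. Qed.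

Lemma eigvals_desc_uniq k (A : 'M[R]_k) s1 s2 :
  eigvals_desc A s1 -> eigvals_desc A s2 -> s1 = s2.
Proof.
move=> [srt1 cp1] [srt2 cp2]; apply: sorted_eq srt1 srt2 _.
- by move=> a b c /[swap]; apply: le_trans.
- by move=> a b /andP[ba ab]; apply/le_anti; rewrite ab ba.
- by apply: prod_XsubC_eq; rewrite -cp1 -cp2.
Qed.

Lemma spectrum_leE k (A : 'M[R]_k) b : (exists s, eigvals_desc A s) ->
  spectrum_le A b <-> forall i : 'I_k, nth 0 (eigvals A) i <= b i.
Proof.
move=> exA; have dA : eigvals_desc A (eigvals A) by apply: xgetPex.
by split => [leAb | leAb s dAs]; [apply: leAb | rewrite (eigvals_desc_uniq dAs dA)].
Qed.

Lemma eigvals_desc_enumP k (A : 'M[R]_k) (w : 'I_k -> R) :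
  eigvals_desc A [seq w i | i <- enum 'I_k] <->
  (forall x, \det (x%:M - A) = \prod_i (x - w i)) /\
  (forall i j : 'I_k, (i <= j)%N -> w j <= w i).
Proof.
have prodE x : \prod_(a <- [seq w i | i <- enum 'I_k]) (x - a) = \prod_i (x - w i).
  by rewrite big_map big_enum.
split => [[/sorted_ge_map_enum srt /char_poly_prod_XsubC cpA] |[cpA srt]].
  by split => // x; rewrite cpA prodE.
by split; [apply/sorted_ge_map_enum | apply/char_poly_prod_XsubC => x; rewrite prodE].
Qed.

Lemma eigvals_desc_sym k (A : 'M[R]_k) : A^T = A -> exists s, eigvals_desc A s.
Proof.
(* The complexification of A is hermitian, hence unitarily similar to a
   diagonal matrix with real entries. *)
move=> symA; pose Ac := map_mx (real_complex R) A.
have hermA : Ac \is hermsymmx.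
  apply: realsym_hermsym.
    by apply/is_hermitianmxP; rewrite expr0 scale1r map_mx_id // map_trmx symA.
  apply/mxOverP => i j; rewrite mxE; apply/complex_realP; by exists (A i j).
have /orthomx_spectralP eqA := hermitian_normalmx hermA.
have realD := hermitian_spectral_diag_real hermA.
set sp := spectral_diag Ac in eqA realD.
pose s := [seq complex.Re (sp 0 i) | i <- enum 'I_k].
have cpA : char_poly A = \prod_(a <- s) ('X - a%:P).
  apply: (@map_poly_inj _ _ (real_complex R)).
  rewrite map_char_poly -/Ac eqA char_poly_similar ?spectral_unit //.
  rewrite char_poly_trig ?diag_mx_is_trig // rmorph_prod big_map big_enum /=.
  apply: eq_bigr => i _; rewrite map_polyXsubC mxE eqxx mulr1n.
  have real_sp : sp 0 i = real_complex R (complex.Re (sp 0 i)).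
    by rewrite RRe_real //; apply: (mxOverP realD).
  by rewrite real_sp.
exists (sort (fun a b => b <= a) s); split.
  by apply: sort_sorted => a b; apply: le_total.
by rewrite cpA; apply: perm_big; rewrite perm_sym perm_sort.
Qed.

Lemma eigvals_desc_gram k l (J : 'M[R]_(k, l)) : exists s, eigvals_desc (J *m J^T) s.
Proof. by apply: eigvals_desc_sym; rewrite trmx_mul trmxK. Qed.

Lemma eigvals_desc_gram_ge0 k l (J : 'M[R]_(k, l)) s a :
  eigvals_desc (J *m J^T) s -> a \in s -> 0 <= a.
Proof.
case=> _ cpJ s_a; have : eigenvalue (J *m J^T) a.
  by rewrite eigenvalue_root_char cpJ root_prod_XsubC.
case/eigenvalueP => v vJ nz_v.
have vJJv : (v *m J) *m (v *m J)^T = a *: (v *m v^T).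
  by rewrite trmx_mul mulmxA -(mulmxA v) vJ -scalemxAl.
have sqr_norm_ge0 p (w : 'rV[R]_p) : 0 <= (w *m w^T) 0 0.
  by rewrite mxE sumr_ge0 // => i _; rewrite mxE -expr2 sqr_ge0.
have vv_gt0 : 0 < (v *m v^T) 0 0.
  rewrite lt_def sqr_norm_ge0 andbT mxE; apply: contra nz_v => /eqP vv0.
  apply/eqP/rowP => j; rewrite mxE; apply/eqP; rewrite -sqrf_eq0 expr2.
  apply/eqP; move: vv0; under eq_bigr do rewrite mxE.
  by move/psumr_eq0P; apply => // i _; rewrite -expr2 sqr_ge0.
by have := sqr_norm_ge0 _ (v *m J); rewrite vJJv mxE pmulr_lge0.
Qed.

End Eigenvalues.

(** * Degree bounds *)

Section DegreeBound.
Variables (R : realType) (n : nat).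
Implicit Types (p q : mpol n R) (d e : nat).

Lemma mdeg_leP p d :
  reflect (forall mm, (d < mpoly.mdeg mm)%N -> mpoly.mcoeff mm p = 0) (mdeg_le p d).
Proof.
apply: (iffP allP) => [le_supp mm lt_dm | coef0 mm].
  by apply: mpoly.memN_msupp_eq0; apply/negP => /le_supp; rewrite leqNgt lt_dm.
by rewrite mpoly.mcoeff_msupp leqNgt; apply: contra => /coef0 ->.
Qed.

Lemma mdeg_leW p d e : (d <= e)%N -> mdeg_le p d -> mdeg_le p e.
Proof.
move=> le_de /mdeg_leP dp; apply/mdeg_leP => mm lt_em.
by apply: dp; apply: leq_ltn_trans lt_em.
Qed.

Lemma mdeg_leC (c : R) d : mdeg_le (mpoly.mpolyC n c) d.
Proof.
apply/mdeg_leP => mm; rewrite mpoly.mcoeffC.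
by case: eqP => [->|_]; rewrite ?mpoly.mdeg0 ?mulr0.
Qed.

Lemma mdeg_le0 d : mdeg_le (0 : mpol n R) d.
Proof. by apply/mdeg_leP => mm _; rewrite mpoly.mcoeff0. Qed.

Lemma mdeg_leD p q d : mdeg_le p d -> mdeg_le q d -> mdeg_le (p + q) d.
Proof.
move=> /mdeg_leP dp /mdeg_leP dq; apply/mdeg_leP => mm lt_dm.
by rewrite mpoly.mcoeffD dp // dq // addr0.
Qed.

Lemma mdeg_leN p d : mdeg_le p d -> mdeg_le (- p) d.
Proof.
by move=> /mdeg_leP dp; apply/mdeg_leP => mm ?; rewrite mpoly.mcoeffN dp ?oppr0.
Qed.

Lemma mdeg_leMn p d k : mdeg_le p d -> mdeg_le (p *+ k) d.
Proof.
by move=> /mdeg_leP dp; apply/mdeg_leP => mm ?; rewrite mpoly.mcoeffMn dp ?mul0rn.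
Qed.

Lemma mdeg_leZ p (c : R) d : mdeg_le p d -> mdeg_le (c *: p) d.
Proof.
by move=> /mdeg_leP dp; apply/mdeg_leP => mm ?; rewrite mpoly.mcoeffZ dp ?mulr0.
Qed.

Lemma mdeg_leM p q d e : mdeg_le p d -> mdeg_le q e -> mdeg_le (p * q) (d + e).
Proof.
move=> /allP dp /allP dq; apply/allP => mm /mpoly.msuppM_le /allpairsP.
by case=> -[m1 m2] /= [/dp le1 /dq le2 ->]; rewrite mpoly.mdegD leq_add.
Qed.

Lemma mdeg_leX p d k : mdeg_le p d -> mdeg_le (p ^+ k) (d * k).
Proof.
move=> dp; elim: k => [|k IHk]; first by rewrite expr0 -mpoly.mpolyC1 mdeg_leC.
by rewrite exprS mulnS mdeg_leM.
Qed.

Lemma mdeg_le_sum (I : Type) (r : seq I) (P : pred I) (F : I -> mpol n R) d :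
  (forall i, P i -> mdeg_le (F i) d) -> mdeg_le (\sum_(i <- r | P i) F i) d.
Proof.
move=> dF; apply: (big_ind (fun q : mpol n R => mdeg_le q d)) => //.
- exact: mdeg_le0.
- by move=> p q; apply: mdeg_leD.
Qed.

Lemma mdeg_le_mderiv p i d : mdeg_le p d -> mdeg_le (mpoly.mderiv i p) d.
Proof.
move=> dp; rewrite /mpoly.mderiv big_seq; apply: mdeg_le_sum => mm /(allP dp) le_md.
apply: mdeg_leZ; apply/mdeg_leP => mm'; rewrite mpoly.mcoeffX.
case: eqP => [<-|//]; rewrite ltnNge => /negP; case.
exact: leq_trans (mpoly.mdegB _ _) le_md.
Qed.

End DegreeBound.

Section TermPolynomial.
Variables (R : realType) (n : nat).

Fixpoint mpoly_of_term (E : nat -> mpol n R) (t : GRing.term R) : mpol n R :=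
  match t with
  | GRing.Var i => E i
  | GRing.Const c => mpoly.mpolyC n c
  | GRing.NatConst k => k%:R
  | GRing.Add a b => mpoly_of_term E a + mpoly_of_term E b
  | GRing.Opp a => - mpoly_of_term E a
  | GRing.NatMul a k => mpoly_of_term E a *+ k
  | GRing.Mul a b => mpoly_of_term E a * mpoly_of_term E b
  | GRing.Inv _ => 0
  | GRing.Exp a k => mpoly_of_term E a ^+ k
  end.

Fixpoint term_deg (t : GRing.term R) : nat :=
  match t with
  | GRing.Var _ => 1
  | GRing.Const _ | GRing.NatConst _ | GRing.Inv _ => 0
  | GRing.Add a b => maxn (term_deg a) (term_deg b)
  | GRing.Opp a | GRing.NatMul a _ => term_deg a
  | GRing.Mul a b => term_deg a + term_deg b
  | GRing.Exp a k => term_deg a * k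
  end.

Lemma mdeg_le_mpoly_of_term E d t :
  (forall i, mdeg_le (E i) d) -> mdeg_le (mpoly_of_term E t) (term_deg t * d).
Proof.
move=> dE; elim: t => /=.
- by move=> i; rewrite mul1n.
- by move=> c; apply: mdeg_leC.
- by move=> k; rewrite -mpoly.mpolyC_nat mdeg_leC.
- by move=> a Ha b Hb; apply: mdeg_leD; [apply: mdeg_leW Ha | apply: mdeg_leW Hb];
    rewrite leq_mul2r ?leq_maxl ?leq_maxr orbT.
- by move=> a; apply: mdeg_leN.
- by move=> a Ha k; apply: mdeg_leMn.
- by move=> a Ha b Hb; rewrite mulnDl mdeg_leM.
- by move=> *; apply: mdeg_le0.
- by move=> a Ha k; rewrite mulnAC mdeg_leX.
Qed.

Lemma peval_mpoly_of_term (Es : seq (mpol n R)) x t : GRing.rterm t ->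
  peval (mpoly_of_term (nth 0 Es) t) x = GRing.eval [seq peval q x | q <- Es] t.
Proof.
rewrite /peval; elim: t => //=.
- move=> i _; have [lt_iE|le_Ei] := ltnP i (size Es); first by rewrite (nth_map 0).
  by rewrite !nth_default ?size_map // mpoly.meval0.
- by move=> c _; rewrite mpoly.mevalC.
- by move=> k _; rewrite rmorph_nat.
- by move=> a Ha b Hb /andP[ra rb]; rewrite mpoly.mevalD Ha // Hb.
- by move=> a Ha ra; rewrite mpoly.mevalN Ha.
- by move=> a Ha k ra; rewrite mpoly.mevalMn Ha.
- by move=> a Ha b Hb /andP[ra rb]; rewrite mpoly.mevalM Ha // Hb.
- by move=> a Ha k ra; rewrite rmorphXn /= Ha.
Qed.

End TermPolynomial.

(** * Sign conditions and quantifier elimination *)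

Section SignDNF.
Variable R : realType.
Local Notation term := (GRing.term R).
Local Notation formula := (ord.formula R).
Local Notation sign_clause := (seq (term * R)).

Definition and_dnf (A B : seq sign_clause) : seq sign_clause :=
  [seq a ++ b | a <- A, b <- B].

Fixpoint sign_dnf (f : formula) (neg : bool) : seq sign_clause :=
  match f with
  | ord.Bool b => if b (+) neg then [:: [::]] else [::]
  | ord.Equal a b => if neg then [:: [:: ((a - b)%T, 1)]; [:: ((a - b)%T, -1)]]
                     else [:: [:: ((a - b)%T, 0)]]
  | ord.Lt a b => if neg then [:: [:: ((a - b)%T, 0)]; [:: ((a - b)%T, 1)]]
                  else [:: [:: ((b - a)%T, 1)]]
  | ord.Le a b => if neg then [:: [:: ((a - b)%T, 1)]]
                  else [:: [:: ((b - a)%T, 0)]; [:: ((b - a)%T, 1)]]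
  | ord.And f1 f2 => if neg then sign_dnf f1 true ++ sign_dnf f2 true
                     else and_dnf (sign_dnf f1 false) (sign_dnf f2 false)
  | ord.Or f1 f2 => if neg then and_dnf (sign_dnf f1 true) (sign_dnf f2 true)
                    else sign_dnf f1 false ++ sign_dnf f2 false
  | ord.Implies f1 f2 => if neg then and_dnf (sign_dnf f1 false) (sign_dnf f2 true)
                         else sign_dnf f1 true ++ sign_dnf f2 false
  | ord.Not f1 => sign_dnf f1 (~~ neg)
  | ord.Unit _ | ord.Exists _ _ | ord.Forall _ _ => [::]
  end.

Definition sign_clause_sat (e : seq R) (cl : sign_clause) : bool :=
  all (fun ts => Num.sg (GRing.eval e ts.1) == ts.2) cl.

Definition sign_clause_wf (cl : sign_clause) : bool :=
  all (fun ts => GRing.rterm ts.1 && (ts.2 \in [:: 0; 1; -1])) cl.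

Lemma has_and_dnf e A B : has (sign_clause_sat e) (and_dnf A B) =
  has (sign_clause_sat e) A && has (sign_clause_sat e) B.
Proof.
elim: A => [|a A IHA] //=; rewrite has_cat IHA has_map /preim /=.
have -> : has (fun b => sign_clause_sat e (a ++ b)) B =
          sign_clause_sat e a && has (sign_clause_sat e) B.
  rewrite /sign_clause_sat; under eq_has do rewrite all_cat.
  by case: (all _ a) => //=; elim: (B) {IHA}.
by case: (sign_clause_sat e a); case: (has _ A); case: (has _ B).
Qed.

Lemma and_dnf_wf A B :
  all sign_clause_wf A -> all sign_clause_wf B -> all sign_clause_wf (and_dnf A B).
Proof.
elim: A => [|a A IHA] //= /andP[wfa wfA] wfB.
rewrite /and_dnf /= all_cat -/(and_dnf A B) IHA // andbT all_map.
rewrite (@eq_all _ _ sign_clause_wf) // => b /=.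
by move: wfa; rewrite /sign_clause_wf all_cat => ->.
Qed.

Lemma qf_eval_sign_dnf e f neg : ord.qf_form f -> ord.rformula f ->
  ord.qf_eval e f (+) neg = has (sign_clause_sat e) (sign_dnf f neg).
Proof.
rewrite /sign_clause_sat; elim: f neg => //=.
- by move=> b neg _ _; case: (b (+) neg).
- move=> a b [] _ _ /=; rewrite ?addbT ?addbF !orbF !andbT.
    by rewrite !sgr_cp0 subr_gt0 subr_lt0; case: ltgtP.
  by rewrite sgr_cp0 subr_eq0.
- move=> a b [] _ _ /=; rewrite ?addbT ?addbF !orbF !andbT.
    by rewrite !sgr_cp0 subr_eq0 subr_gt0; case: ltgtP.
  by rewrite sgr_cp0 subr_gt0.
- move=> a b [] _ _ /=; rewrite ?addbT ?addbF !orbF !andbT.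
    by rewrite sgr_cp0 subr_gt0 -ltNge.
  by rewrite !sgr_cp0 subr_eq0 subr_gt0; case: ltgtP.
1-3: move=> f1 IH1 f2 IH2 [] /andP[q1 q2] /andP[r1 r2];
  rewrite ?has_cat ?has_and_dnf -IH1 // -IH2 //;
  by case: (ord.qf_eval e f1); case: (ord.qf_eval e f2).
by move=> f1 IH1 neg q1 r1; rewrite -IH1 //; case: neg; case: (ord.qf_eval e f1).
Qed.

Lemma sign_dnf_wf f neg : ord.rformula f -> all sign_clause_wf (sign_dnf f neg).
Proof.
rewrite /sign_clause_wf; elim: f neg => //=.
- by move=> b neg _; case: (b (+) neg).
- by move=> a b [] /andP[ra rb]; rewrite /= ra rb !inE !eqxx ?orbT.
- by move=> a b [] /andP[ra rb]; rewrite /= ra rb !inE !eqxx ?orbT.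
- by move=> a b [] /andP[ra rb]; rewrite /= ra rb !inE !eqxx ?orbT.
1-3: by move=> f1 IH1 f2 IH2 [] /andP[r1 r2];
  rewrite ?all_cat ?IH1 ?IH2 //; apply: and_dnf_wf; [apply: IH1 | apply: IH2].
by move=> f1 IH1 neg; apply: IH1.
Qed.

End SignDNF.

Section FormulaDiagram.
Variables (R : realType) (F : ord.formula R).
Hypothesis rF : ord.rformula F.

Definition qe_dnf : seq (seq (GRing.term R * R)) :=
  sign_dnf (ord.quantifier_elim (@wproj R) F) false.

Local Notation clause i := (nth [::] qe_dnf i).
Local Notation atom0 := (GRing.NatConst R 0, 0 : R).
Local Notation atom i j := (nth atom0 (clause i) j).

Definition dnf_width : nat :=
  (size qe_dnf * \max_(i < size qe_dnf) size (clause i))%N.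

Definition dnf_degree : nat :=
  (\max_(i < size qe_dnf) \max_(j < size (clause i)) term_deg (atom i j).1)%N.

Lemma holds_qe_dnf e : ord.holds e F <-> has (sign_clause_sat e) qe_dnf.
Proof.
have /andP[qfQ rQ] := ord.quantifier_elim_wf (@wf_QE_wproj R) rF.
rewrite -[has _ _]qf_eval_sign_dnf // addbF.
exact: rwP (ord.quantifier_elim_rformP (@wf_QE_wproj R) (@valid_QE_wproj R) e rF).
Qed.

Lemma atom_wf i j : (i < size qe_dnf)%N -> (j < size (clause i))%N ->
  GRing.rterm (atom i j).1 && ((atom i j).2 \in [:: 0; 1; -1]).
Proof.
have /andP[_ rQ] := ord.quantifier_elim_wf (@wf_QE_wproj R) rF.
by move=> lti ltj; apply: (all_nthP _ (all_nthP _ (sign_dnf_wf false rQ) i lti)).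
Qed.

Lemma semialg_diagram_holds n (Es : seq (mpol n R)) d :
  (forall k, mdeg_le (nth 0 Es k) d) ->
  semialg_diagram [set x | ord.holds [seq peval q x | q <- Es] F]
    dnf_width (dnf_degree * d).
Proof.
move=> dEs.
pose P (i : 'I_(size qe_dnf)) (j : 'I_(size (clause i))) :=
  mpoly_of_term (nth 0 Es) (atom i j).1.
exists (size qe_dnf), (fun i => size (clause i)), P, (fun i j => (atom i j).2).
split => //.
- move=> i j; apply: mdeg_leW (mdeg_le_mpoly_of_term _ dEs); rewrite leq_mul2r.
  by rewrite (leq_trans (leq_bigmax j) (leq_bigmax i)) orbT.
- by move=> i j; case/andP: (atom_wf (ltn_ord i) (ltn_ord j)).
apply/seteqP; split => x /=; rewrite holds_qe_dnf.
  case/(has_nthP [::]) => i lti /(all_nthP atom0) sat_i.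
  exists (Ordinal lti) => j; apply/eqP.
  case/andP: (atom_wf lti (ltn_ord j)) => rt _.
  by rewrite /P peval_mpoly_of_term //; apply: sat_i.
case=> i sat_i; apply/(has_nthP [::]); exists (val i) => //=.
apply/(all_nthP atom0) => j ltj.
case/andP: (atom_wf (ltn_ord i) ltj) => rt _.
by have := sat_i (Ordinal ltj); rewrite /P peval_mpoly_of_term // => ->.
Qed.

End FormulaDiagram.

Section FormulaBuilders.
Variable R : realType.
Local Notation term := (GRing.term R).
Local Notation formula := (ord.formula R).

Lemma eval_big_add e (I : Type) (r : seq I) (P : pred I) (F : I -> term) :
  GRing.eval e (\big[GRing.Add/GRing.NatConst R 0]_(i <- r | P i) F i) =
  \sum_(i <- r | P i) GRing.eval e (F i).
Proof. exact: (big_morph (GRing.eval e) (fun a b => erefl) erefl). Qed.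

Lemma eval_big_mul e (I : Type) (r : seq I) (P : pred I) (F : I -> term) :
  GRing.eval e (\big[GRing.Mul/GRing.NatConst R 1]_(i <- r | P i) F i) =
  \prod_(i <- r | P i) GRing.eval e (F i).
Proof. exact: (big_morph (GRing.eval e) (fun a b => erefl) erefl). Qed.

Definition big_and (I : Type) (r : seq I) (f : I -> formula) : formula :=
  foldr (fun i g => ord.And (f i) g) (ord.Bool true) r.

Lemma holds_big_and e (I : eqType) (r : seq I) f :
  ord.holds e (big_and r f) <-> forall i, i \in r -> ord.holds e (f i).
Proof.
elim: r => [|j r IHr] /=; first by [].
rewrite IHr; split => [[fj fr] i|fr]; first by rewrite inE => /predU1P[->|/fr].
by split => [|i ri]; apply: fr; rewrite inE ?eqxx ?ri ?orbT.
Qed.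

Lemma rformula_big_and (I : Type) (r : seq I) f :
  (forall i, ord.rformula (f i)) -> ord.rformula (big_and r f).
Proof. by move=> rf; elim: r => //= i r ->; rewrite rf. Qed.

Fixpoint set_nths (e : seq R) (k : nat) (v : seq R) : seq R :=
  if v is x :: v' then set_nths (set_nth 0 e k x) k.+1 v' else e.

Definition forall_block (k len : nat) (f : formula) : formula :=
  foldr (@ord.Forall R) f (iota k len).

Lemma nth_set_nths e k v i : nth 0 (set_nths e k v) i =
  if (k <= i < k + size v)%N then nth 0 v (i - k) else nth 0 e i.
Proof.
elim: v e k => [|x v IHv] e k /=.
  by rewrite addn0; case: leqP => // lt_ki; rewrite ltnNge lt_ki.
rewrite IHv nth_set_nth /= addSnnS; case: ltngtP => [lt_ki|lt_ik|<-].
- by rewrite -[(i - k)%N]prednK ?subn_gt0 // subnS.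
- by [].
- by rewrite subnn addnS ltnS leq_addr.
Qed.

Lemma holds_forall_block e k N f :
  ord.holds e (forall_block k N f) <->
  forall v, size v = N -> ord.holds (set_nths e k v) f.
Proof.
elim: N e k => [|N IHN] e k /=.
  by split => [fe [] | /(_ [::])]; last exact.
split => [fe [|x v] //= [sv] | fv x]; first exact: (IHN _ _).1 (fe x) v sv.
by apply/(IHN _ _).2 => v sv; apply: (fv (x :: v)); rewrite /= sv.
Qed.

End FormulaBuilders.

(** * The spectral condition as a formula *)

Section SpectrumFormula.
Variables (R : realType) (m : nat).
Local Notation term := (GRing.term R).
Local Notation formula := (ord.formula R).

(* Variables of the formula: the entries of the matrix come first (in the
   order of [mxvec]), then the m bounds, then the m candidate eigenvalues, and
   last the variable x of the characteristic polynomial. *)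
Definition var_mx (i j : 'I_m) : nat := mxvec_index i j.
Definition var_bound (i : nat) : nat := (m * m + i)%N.
Definition eig_base : nat := (m * m + m)%N.
Definition var_eig (i : nat) : nat := (eig_base + i)%N.
Definition var_x : nat := (eig_base + m)%N.

Definition env_mx (e : seq R) : 'M[R]_m := vec_mx (\row_k nth 0 e k).
Definition env_bound (e : seq R) (i : 'I_m) : R := nth 0 e (var_bound i).
Definition env_eig (e : seq R) : seq R := mkseq (fun i => nth 0 e (var_eig i)) m.

Definition det_term (A : 'M[term]_m) : term :=
  \big[GRing.Add/GRing.NatConst R 0]_(s : 'S_m)
    GRing.Mul (GRing.Exp (GRing.Opp (GRing.NatConst R 1)) (odd_perm s))
              (\big[GRing.Mul/GRing.NatConst R 1]_i A i (s i)).

Lemma eval_det_term e (A : 'M[term]_m) :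
  GRing.eval e (det_term A) = \det (map_mx (GRing.eval e) A).
Proof.
rewrite eval_big_add; apply: eq_bigr => s _ /=.
by rewrite eval_big_mul; congr (_ * _); apply: eq_bigr => i _; rewrite mxE.
Qed.

Lemma rterm_det_term (A : 'M[term]_m) :
  (forall i j, GRing.rterm (A i j)) -> GRing.rterm (det_term A).
Proof.
move=> rA; apply: (big_ind (@GRing.rterm R)) => //= [a b -> -> // | s _].
by apply: (big_ind (@GRing.rterm R)) => //= a b -> ->.
Qed.

Definition char_mx_term : 'M[term]_m :=
  \matrix_(i, j) GRing.Add (GRing.NatMul (GRing.Var R var_x) (i == j))
                           (GRing.Opp (GRing.Var R (var_mx i j))).

Definition char_prod_term : term :=
  \big[GRing.Mul/GRing.NatConst R 1]_(i <- iota 0 m) ('X_var_x - 'X_(var_eig i))%T.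

Definition char_formula : formula :=
  ord.Forall var_x (ord.Equal (det_term char_mx_term) char_prod_term).

Definition sorted_formula : formula :=
  big_and (iota 0 m.-1) (fun i => ord.Le 'X_(var_eig i.+1) 'X_(var_eig i))%T.

Definition bound_formula : formula :=
  big_and (iota 0 m) (fun i => ord.Le 'X_(var_eig i) 'X_(var_bound i))%T.

Definition spectrum_formula : formula :=
  forall_block eig_base m
    (ord.Implies (ord.And char_formula sorted_formula) bound_formula).

Lemma rformula_spectrum_formula : ord.rformula spectrum_formula.
Proof.
have r_det : GRing.rterm (det_term char_mx_term).
  by apply: rterm_det_term => i j; rewrite mxE.
have r_prod : GRing.rterm char_prod_term.
  by apply: (big_ind (@GRing.rterm R)) => //= a b -> ->.
rewrite /spectrum_formula /forall_block; elim: (iota _ _) => /= [|_ l -> //].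
by rewrite r_det r_prod !rformula_big_and.
Qed.

Lemma holds_char_formula e :
  ord.holds e char_formula <-> char_poly (env_mx e) = \prod_(a <- env_eig e) ('X - a%:P).
Proof.
have env_x x : env_mx (set_nth 0 e var_x x) = env_mx e.
  congr vec_mx; apply/rowP => k; rewrite !mxE nth_set_nth /= ifN_eq //.
  by rewrite neq_ltn (leq_trans (ltn_ord k)) // /var_x /eig_base -addnA leq_addr.
have eval_prod x : GRing.eval (set_nth 0 e var_x x) char_prod_term =
                   \prod_(a <- env_eig e) (x - a).
  rewrite eval_big_mul /env_eig /mkseq big_map !big_seq.
  apply: eq_bigr => i; rewrite mem_iota add0n => /andP[_ lt_im] /=.
  by rewrite !nth_set_nth /= eqxx eqn_add2l ltn_eqF.
have map_char x :
    map_mx (GRing.eval (set_nth 0 e var_x x)) char_mx_term = x%:M - env_mx e.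
  by apply/matrixP => i j; rewrite -(env_x x) !mxE /= nth_set_nth /= eqxx.
rewrite char_poly_prod_XsubC /=; split => eq_det x; have := eq_det x;
  by rewrite eval_det_term eval_prod map_char.
Qed.

Lemma holds_sorted_formula e :
  ord.holds e sorted_formula <-> sorted (fun a b => b <= a) (env_eig e).
Proof.
rewrite holds_big_and; apply: (iff_trans _ (rwP (sortedP 0))).
rewrite /env_eig size_mkseq; split => srt i.
  move=> lt_i1m; have := srt i; rewrite mem_iota leq0n add0n ltn_predRL lt_i1m.
  by move=> /(_ isT) /=; rewrite !nth_mkseq // ltnW.
rewrite mem_iota leq0n add0n ltn_predRL => lt_i1m /=.
by have := srt i lt_i1m; rewrite !nth_mkseq // ltnW.
Qed.

Lemma holds_bound_formula e : ord.holds e bound_formula <->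
  forall i : 'I_m, nth 0 (env_eig e) i <= env_bound e i.
Proof.
rewrite holds_big_and; split => le_eb i.
  by have := le_eb i; rewrite mem_iota ltn_ord nth_mkseq //; apply.
rewrite mem_iota add0n => /andP[_ lt_im].
by have := le_eb (Ordinal lt_im); rewrite nth_mkseq.
Qed.

Lemma holds_spectrum_formula e :
  ord.holds e spectrum_formula <-> spectrum_le (env_mx e) (env_bound e).
Proof.
rewrite holds_forall_block.
have env_set s : size s = m -> [/\ env_mx (set_nths e eig_base s) = env_mx e,
    env_bound (set_nths e eig_base s) = env_bound e &
    env_eig (set_nths e eig_base s) = s].
  move=> ss; split.
  - congr vec_mx; apply/rowP => k; rewrite !mxE nth_set_nths ifN //.
    by rewrite negb_and -ltnNge (leq_trans (ltn_ord k)) // leq_addr.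
  - apply/funext => i; rewrite /env_bound nth_set_nths ifN //.
    by rewrite negb_and -ltnNge ltn_add2l ltn_ord.
  - apply: (@eq_from_nth _ 0); rewrite size_mkseq // => i lt_im.
    by rewrite nth_mkseq // nth_set_nths /var_eig leq_addr ss ltn_add2l lt_im addKn.
pose body e' := ord.holds e' char_formula /\ ord.holds e' sorted_formula ->
                 ord.holds e' bound_formula.
have bodyE s : size s = m -> body (set_nths e eig_base s) <->
    (eigvals_desc (env_mx e) s -> forall i : 'I_m, nth 0 s i <= env_bound e i).
  move=> ss; have [eA eb es] := env_set s ss.
  rewrite /body holds_char_formula holds_sorted_formula holds_bound_formula eA eb es.
  by split=> le_s; [case => srt cpA; apply: le_s | move=> [cpA srt]; apply: le_s].
split => [fe s dAs | leA s ss]; last exact/(bodyE s ss)/leA.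
have ss := eigvals_desc_size dAs; exact: (bodyE s ss).1 (fe s ss) dAs.
Qed.

End SpectrumFormula.

Definition spectrum_env (T : Type) m (A : 'M[T]_m) (b : 'I_m -> T) : seq T :=
  [seq mxvec A 0 k | k <- enum 'I_(m * m)] ++ [seq b i | i <- enum 'I_m].

Lemma map_spectrum_env (T U : Type) (f : T -> U) m (A : 'M[T]_m) b :
  map f (spectrum_env A b) = spectrum_env (map_mx f A) (f \o b).
Proof.
rewrite map_cat -(map_comp f (fun k => mxvec A 0 k)) -(map_comp f b); congr (_ ++ _).
by apply: eq_map => k /=; rewrite -map_mxvec mxE.
Qed.

Section SpectrumDiagram.
Variables (R : realType) (m : nat).

Lemma env_mx_spectrum_env (A : 'M[R]_m) b : env_mx m (spectrum_env A b) = A.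
Proof.
rewrite -[RHS]mxvecK; congr vec_mx; apply/rowP => k.
by rewrite mxE nth_cat size_map size_enum_ord ltn_ord nth_map_ord_enum.
Qed.

Lemma env_bound_spectrum_env (A : 'M[R]_m) b : env_bound (spectrum_env A b) = b.
Proof.
apply/funext => i; rewrite /env_bound /var_bound nth_cat size_map size_enum_ord.
by rewrite ltnNge leq_addr /= addKn nth_map_ord_enum.
Qed.

Lemma semialg_diagram_spectrum_le n (A : 'M[mpol n R]_m) (b : 'I_m -> mpol n R) d :
  (forall i j, mdeg_le (A i j) d) -> (forall i, mdeg_le (b i) d) ->
  semialg_diagram [set x : 'rV[R]_n |
      spectrum_le (map_mx (fun q => peval q x) A) (fun i => peval (b i) x)]
    (dnf_width (spectrum_formula R m)) (dnf_degree (spectrum_formula R m) * d).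
Proof.
move=> dA db; set S := [set x | _].
have -> : S = [set x | ord.holds [seq peval q x | q <- spectrum_env A b]
                                 (spectrum_formula R m)].
  apply/seteqP; split => x; rewrite /S /= (map_spectrum_env (fun q => peval q x));
  by rewrite holds_spectrum_formula env_mx_spectrum_env env_bound_spectrum_env.
apply: semialg_diagram_holds; first exact: rformula_spectrum_formula.
have d_env q : q \in spectrum_env A b -> mdeg_le q d.
  rewrite mem_cat => /orP[] /mapP[k _ ->] //.
  by case/mxvec_indexP: k => i j; rewrite mxvecE.
move=> k; have [lt_k|le_k] := ltnP k (size (spectrum_env A b)).
  exact/d_env/mem_nth.
by rewrite nth_default // mdeg_le0.
Qed.

End SpectrumDiagram.

(** * Closedness *)

Section Continuity.
Variables (R : realType) (T : topologicalType).

Lemma continuous_sum (I : Type) (r : seq I) (P : pred I) (F : I -> T -> R) :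
  (forall i, P i -> continuous (F i)) ->
  continuous (fun t => \sum_(i <- r | P i) F i t).
Proof. by apply: continuous_big; exact: add_continuous. Qed.

Lemma continuous_prod (I : Type) (r : seq I) (P : pred I) (F : I -> T -> R) :
  (forall i, P i -> continuous (F i)) ->
  continuous (fun t => \prod_(i <- r | P i) F i t).
Proof. by apply: continuous_big; exact: mul_continuous. Qed.

Lemma continuous_mul (f g : T -> R) :
  continuous f -> continuous g -> continuous (fun t => f t * g t).
Proof. by move=> cf cg t; apply: cvgM; [apply: cf | apply: cg]. Qed.

Lemma continuous_sub (f g : T -> R) :
  continuous f -> continuous g -> continuous (fun t => f t - g t).
Proof. by move=> cf cg t; apply: cvgB; [apply: cf | apply: cg]. Qed.

Lemma continuous_exprn (f : T -> R) k :
  continuous f -> continuous (fun t => f t ^+ k).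
Proof.
move=> cf; elim: k => [|k IHk]; first by under eq_fun do rewrite expr0; apply: cst_continuous.
by under eq_fun do rewrite exprS; apply: continuous_mul.
Qed.

Lemma continuous_det k (A : T -> 'M[R]_k) :
  (forall i j, continuous (fun t => A t i j)) -> continuous (fun t => \det (A t)).
Proof.
move=> cA; apply: continuous_sum => s _; apply: continuous_mul; first exact: cst_continuous.
by apply: continuous_prod => i _; apply: cA.
Qed.

Lemma closed_le_continuous (f g : T -> R) :
  continuous f -> continuous g -> closed [set t | f t <= g t].
Proof.
move=> cf cg; have -> : [set t | f t <= g t] = (fun t => g t - f t) @^-1` [set r | 0 <= r].
  by apply/seteqP; split => t /=; rewrite subr_ge0.
apply: preimage_closed; last exact: closed_ge.
by move=> t _; apply: continuous_sub.
Qed.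

Lemma closed_eq_continuous (f g : T -> R) :
  continuous f -> continuous g -> closed [set t | f t = g t].
Proof.
move=> cf cg; have -> : [set t | f t = g t] = (fun t => g t - f t) @^-1` [set r | r = 0].
  apply/seteqP; split => t /= eq_fg; first by rewrite eq_fg subrr.
  by apply/esym/eqP; rewrite -subr_eq0 eq_fg.
apply: preimage_closed; last exact: closed_eq.
by move=> t _; apply: continuous_sub.
Qed.

End Continuity.

Lemma peval_continuous (R : realType) n (q : mpol n R) : continuous (peval q).
Proof.
have -> : peval q = fun x => \sum_(mm <- mpoly.msupp q)
                       mpoly.mcoeff mm q * \prod_i x ord0 i ^+ mm i.
  by apply/funext => x; rewrite /peval mpoly.mevalE.
apply: continuous_sum => mm _; apply: continuous_mul; first exact: cst_continuous.
by apply: continuous_prod => i _; apply/continuous_exprn/coord_continuous.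
Qed.

Section ClosedSpectrum.
Variables (R : realType) (n m k : nat) (G : 'rV[R]_n -> 'M[R]_(m, k)) (b : 'I_m -> R).
Hypothesis cG : forall i j, continuous (fun y => G y i j).

Local Notation gram y := (G y *m (G y)^T).
Local Notation C := [set y | spectrum_le (gram y) b].

Definition spectral_graph : set 'rV[R]_(n + m) :=
  [set z | eigvals_desc (gram (lsubmx z)) [seq rsubmx z 0 i | i <- enum 'I_m] /\
           forall i, rsubmx z 0 i <= b i].

Lemma closed_spectral_graph : closed spectral_graph.
Proof.
have c_r i : continuous (fun z : 'rV[R]_(n + m) => rsubmx z 0 i).
  by under eq_fun do rewrite mxE; apply: coord_continuous.
have c_l : continuous (lsubmx : 'rV[R]_(n + m) -> 'rV[R]_n).
  exact: continuous_lsubmx.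
have c_G i j : continuous (fun z : 'rV[R]_(n + m) => G (lsubmx z) i j).
  by move=> z; apply: continuous_comp (c_l z) (@cG _ _ _).
have c_gram i j : continuous (fun z : 'rV[R]_(n + m) =>
    \sum_l G (lsubmx z) i l * (G (lsubmx z))^T l j).
  apply: continuous_sum => l _; apply: continuous_mul => //.
  under eq_fun do rewrite mxE.
  exact: c_G.
have -> : spectral_graph =
  \bigcap_(x in setT) [set z | \det (x%:M - gram (lsubmx z)) = \prod_i (x - rsubmx z 0 i)]
  `&` \bigcap_(ij in [set ij : 'I_m * 'I_m | (ij.1 <= ij.2)%N])
        [set z | rsubmx z 0 ij.2 <= rsubmx z 0 ij.1]
  `&` \bigcap_(i in setT) [set z | rsubmx z 0 i <= b i].
  apply/seteqP; split => z /=.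
    case=> /eigvals_desc_enumP[cp srt] le_b; split; first split.
    - by move=> x _; apply: cp.
    - by move=> [i j] /= le_ij; apply: srt.
    - by move=> i _; apply: le_b.
  case=> -[cp srt] le_b; split; last by move=> i; apply: le_b.
  apply/eigvals_desc_enumP; split => [x | i j le_ij]; first exact: cp.
  exact: (srt (i, j)).
apply: closedI; first apply: closedI; apply: closed_bigI.
- move=> x _; apply: closed_eq_continuous.
    apply: continuous_det => i j; under eq_fun do rewrite !mxE.
    by apply: continuous_sub; [apply: cst_continuous | apply: c_gram].
  by apply: continuous_prod => i _; apply: continuous_sub; [apply: cst_continuous | apply: c_r].
- by move=> ij _; apply: closed_le_continuous (c_r _) (c_r _).
- by move=> i _; apply: closed_le_continuous (c_r i) (@cst_continuous _ R (b i)).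
Qed.

Lemma lsubmx_spectral_graph : lsubmx @` spectral_graph `<=` C.
Proof.
move=> _ [z [dz le_b] <-] s ds i.
by rewrite (eigvals_desc_uniq ds dz) nth_map_ord_enum.
Qed.

Definition box_itv (x : 'rV[R]_n) (i : 'I_(n + m)) : set R :=
  if fintype.split i is inl l then `[x 0 l - 1, x 0 l + 1] else `[0, \sum_j `|b j|].

Definition spectrum_box (x : 'rV[R]_n) : set 'rV[R]_(n + m) :=
  [set z | forall i, box_itv x i (z 0 i)].

Lemma compact_spectrum_box x : compact (spectrum_box x).
Proof.
by apply: rV_compact => i; rewrite /box_itv; case: (fintype.split _) => l;
  apply: segment_compact.
Qed.

Lemma ball_sub_lsubmx_spectral_graph x :
  C `&` ball x 1 `<=` lsubmx @` (spectrum_box x `&` spectral_graph).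
Proof.
move=> y [Cy bxy]; have [s ds] := eigvals_desc_gram (G y).
have ss := eigvals_desc_size ds; pose w : 'rV[R]_m := \row_j nth 0 s j.
have sE : [seq rsubmx (row_mx y w) 0 i | i <- enum 'I_m] = s.
  rewrite row_mxKr -[RHS](mkseq_nth 0) ss /mkseq -val_enum_ord -map_comp.
  by apply: eq_map => i /=; rewrite mxE.
exists (row_mx y w); last exact: row_mxKl.
split; last first.
  by rewrite /spectral_graph /= row_mxKl sE; split=> // i; rewrite row_mxKr mxE; apply: Cy.
move=> i; rewrite /box_itv mxE; case: (fintype.split _) => l /=.
  move: bxy => [_ /(_ ord0 l)]; rewrite /ball /= ltr_distlC => /andP[lt1 lt2].
  by rewrite in_itv /= !ltW.
rewrite in_itv /= mxE (eigvals_desc_gram_ge0 ds) ?mem_nth ?ss //=.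
rewrite (le_trans (Cy s ds l)) // (le_trans (ler_norm _)) //.
by rewrite (bigD1 l) //= lerDl sumr_ge0.
Qed.

Lemma closed_spectrum_le_gram : closed C.
Proof.
move=> x clCx; set P := lsubmx @` (spectrum_box x `&` spectral_graph).
have clP : closed P.
  apply: compact_closed; first exact: norm_hausdorff.
  apply: continuous_compact; first exact/continuous_subspaceT/continuous_lsubmx.
  by apply: compact_closedI; [apply: compact_spectrum_box | apply: closed_spectral_graph].
apply: lsubmx_spectral_graph; have [|z [_ gz] <-] := clP x; last by exists z.
move=> B nB; have [y [Cy [By bxy]]] := clCx _ (filterI nB (nbhsx_ballx x 1 ltr01)).
by exists y; split => //; apply: ball_sub_lsubmx_spectral_graph.
Qed.

End ClosedSpectrum.

(** * Jacobians of polynomial maps *)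

Section Jacobian.
Variables (R : realType) (n m : nat) (p : 'I_m -> mpol n R).

Definition jacobian_mpoly : 'M[mpol n R]_(m, n) := \matrix_(i, j) mpoly.mderiv j (p i).

Lemma map_jacobian_mpoly x :
  map_mx (fun q => peval q x) jacobian_mpoly = Defs.jacobian p x.
Proof. by apply/matrixP => i j; rewrite !mxE. Qed.

Lemma map_gram_jacobian_mpoly x :
  map_mx (fun q => peval q x) (jacobian_mpoly *m jacobian_mpoly^T) =
  Defs.jacobian p x *m (Defs.jacobian p x)^T.
Proof.
have -> : (fun q => peval q x) = mpoly.meval (fun i => x ord0 i) by [].
by rewrite map_mxM -map_trmx map_jacobian_mpoly.
Qed.

Lemma mdeg_le_gram_jacobian_mpoly d : (forall i, mdeg_le (p i) d) ->
  forall i j, mdeg_le ((jacobian_mpoly *m jacobian_mpoly^T) i j) (d + d).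
Proof.
move=> dp i j; rewrite mxE; apply: mdeg_le_sum => l _.
by rewrite !mxE; apply: mdeg_leM; apply: mdeg_le_mderiv.
Qed.

Lemma continuous_jacobian i j : continuous (fun x => Defs.jacobian p x i j).
Proof. by under eq_fun do rewrite mxE; apply: peval_continuous. Qed.

Lemma CLambdaE (Lam : 'I_m -> R) : (forall i, 0 <= Lam i) ->
  CLambda p Lam =
  [set x | spectrum_le (Defs.jacobian p x *m (Defs.jacobian p x)^T) (fun i => Lam i ^+ 2)].
Proof.
move=> Lam_ge0; have sqrt_le i a : (Num.sqrt a <= Lam i) = (a <= Lam i ^+ 2).
  by rewrite -{1}(ger0_norm (Lam_ge0 i)) -sqrtr_sqr ler_sqrt ?sqr_ge0.
apply/seteqP; split => x; rewrite /= (spectrum_leE _ (eigvals_desc_gram _)) => le_Lam i.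
  by rewrite -sqrt_le; apply: le_Lam.
by rewrite /sing_val sqrt_le; apply: le_Lam.
Qed.

End Jacobian.

Theorem proposition3p16 (R : realType) :
  forall d m : nat, exists c' d' : nat,
    forall (n : nat), (m <= n)%N ->
    forall (p : 'I_m -> mpol n R), (forall i, mdeg_le (p i) d) ->
    forall (Lam : 'I_m -> R), (forall i, 0 <= Lam i) ->
      closed (CLambda p Lam : set 'rV[R]_n) /\ semialg_diagram (CLambda p Lam) c' d'.
Proof.
move=> d m; exists (dnf_width (spectrum_formula R m)).
exists (dnf_degree (spectrum_formula R m) * (d + d))%N.
(* The bounds hold for every n. *)
move=> n _ p dp Lam Lam_ge0; rewrite CLambdaE //; split.
  exact/closed_spectrum_le_gram/continuous_jacobian.
pose Gp := jacobian_mpoly p *m (jacobian_mpoly p)^T.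
pose Lp i := mpoly.mpolyC n (Lam i ^+ 2).
have -> : [set x | spectrum_le (Defs.jacobian p x *m (Defs.jacobian p x)^T)
                     (fun i => Lam i ^+ 2)] =
          [set x | spectrum_le (map_mx (fun q => peval q x) Gp) (fun i => peval (Lp i) x)].
  apply/eq_set => x; rewrite map_gram_jacobian_mpoly; congr spectrum_le.
  by apply/funext => i; rewrite /peval mpoly.mevalC.
apply: semialg_diagram_spectrum_le => [i j|i]; last exact: mdeg_leC.
exact: mdeg_le_gram_jacobian_mpoly.
Qed.
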